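(* Let $G$ be a graph, $k\ge1$, and suppose $M_k(G)$ is a connected matroid. Then a set $B\subseteq E(G)$ is a base of $M_k(G)$ if and only if $\Delta G\langle B\rangle=k-1$, $V(G\langle B\rangle)=V(G)$, and $G\langle B\rangle$ has no tree component (i.e. $\Delta A\ge0$ for every component $A$ of $G\langle B\rangle$).
   Context: Graphs are finite, may have loops and parallel edges, and have no isolated vertices. $\Delta H=|E(H)|-|V(H)|$. For $X\subseteq E(G)$, $G\langle X\rangle$ is the subgraph with edge set $X$ and vertex set the vertices incident to $X$. For $k\ge0$, $M_k(G)$ is the matroid on $E(G)$ whose circuits are the inclusion-minimal members of $\{C\subseteq E(G):C\neq\emptyset,\ |C|=|V(G\langle C\rangle)|+k\}$. A matroid is connected if its ground set has at least two elements and every two elements lie in a common circuit. *)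

From HB Require Import structures.
From mathcomp Require Import all_boot all_order all_algebra.
Set Implicit Arguments. Unset Strict Implicit. Unset Printing Implicit Defensive.
Import Order.TTheory GRing.Theory Num.Theory.

(* A (multi)graph: finite vertex type V, finite edge type E, and an
   endpoint map [ends : E -> V * V]; a loop is an edge e with
   ends e = (v, v); parallel edges are distinct edges with the same ends. *)
Section Graphs.
Variables (V E : finType) (ends : E -> V * V).

Definition incident (v : V) (e : E) : bool :=
  (v == (ends e).1) || (v == (ends e).2).

Definition no_isolated : Prop := forall v : V, exists e : E, incident v e.

Definition Vsub (X : {set E}) : {set V} := [set v | [exists e in X, incident v e]].

Definition deltaSub (X : {set E}) : int := (#|X|%:Z - #|Vsub X|%:Z)%R.

Definition Mk_dep (k : nat) (C : {set E}) : bool :=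
  (C != set0) && (#|C| == #|Vsub C| + k).

Definition Mk_circuit (k : nat) (C : {set E}) : bool :=
  Mk_dep k C && [forall D : {set E}, (D \proper C) ==> ~~ Mk_dep k D].

Definition Mk_indep (k : nat) (I : {set E}) : bool :=
  [forall C : {set E}, (C \subset I) ==> ~~ Mk_circuit k C].

Definition Mk_base (k : nat) (B : {set E}) : bool :=
  Mk_indep k B && [forall I : {set E}, (B \proper I) ==> ~~ Mk_indep k I].

Definition Mk_connected (k : nat) : Prop :=
  2 <= #|E| /\
  forall e f : E, exists C : {set E}, Mk_circuit k C /\ e \in C /\ f \in C.

Definition adjSub (X : {set E}) : rel V :=
  fun u v => [exists e in X, (ends e == (u, v)) || (ends e == (v, u))].

(* vertex set of the component of G<X> containing v (for v in V(G<X>)) *)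
Definition compV (X : {set E}) (v : V) : {set V} := [set u | connect (adjSub X) v u].

Definition compE (X : {set E}) (v : V) : {set E} :=
  [set e in X | (ends e).1 \in compV X v].

Definition no_tree_component (X : {set E}) : Prop :=
  forall v : V, v \in Vsub X -> (#|compV X v| <= #|compE X v|)%N.

End Graphs.

(* For k >= 1 a set is independent in M_k(G) exactly when it is sparse: every
   nonempty subset Y has Delta G<Y> <= k - 1.

   If B spans G, has Delta B = k - 1 and no tree component, then any Y ⊆ B can
   be grown back to B by adding either an edge that touches V(G<Y>) or a whole
   component of G<B> avoiding it; each step adds at most as many vertices as
   edges, so Delta Y <= Delta B and B is sparse.  It is a maximal one because
   it already covers every vertex.

   Conversely, let B be a base and call T ⊆ B tight when Delta T = k - 1.  By
   submodularity tight sets are closed under union, so there is a largest one,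
   T.  Each edge e outside B closes a circuit C, and C - e is tight with the
   same vertices as C, so e lies in the subgraph induced by V(G<T>).  A circuit
   through such an edge cannot leave that induced subgraph without violating
   |C| = |V(G<C>)| + k, and since M_k(G) is connected every edge lies on such a
   circuit.  Hence B = T is tight and spanning, and removing a tree component
   from B would contradict sparsity. *)

From HB Require Import structures.
From mathcomp Require Import all_boot all_order all_algebra.
From mathcomp Require Import zify.
Import Order.TTheory GRing.Theory Num.Theory.
Set Implicit Arguments. Unset Strict Implicit. Unset Printing Implicit Defensive.

Lemma leq_card_disjoint (T : finType) (A B C : {set T}) :
  [disjoint A & B] -> A :|: B \subset C -> #|A| + #|B| <= #|C|.
Proof. by move=> dAB /subset_leq_card; rewrite -cardsUI disjoint_setI0 // cards0 addn0. Qed.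

Section Graph.
Variables (V E : finType) (ends : E -> V * V).
Implicit Types (B X Y : {set E}) (e : E) (v w : V).

Lemma VsubP X v : reflect (exists2 e, e \in X & incident ends v e) (v \in Vsub ends X).
Proof.
rewrite inE; apply: (iffP existsP) => [[e /andP[]]|[e eX ve]]; first by exists e.
by exists e; rewrite eX.
Qed.

Lemma VsubS X Y : X \subset Y -> Vsub ends X \subset Vsub ends Y.
Proof.
move=> sXY; apply/subsetP => v /VsubP[e eX ve]; apply/VsubP.
by exists e; first exact: (subsetP sXY).
Qed.

Lemma VsubU X Y : Vsub ends (X :|: Y) = Vsub ends X :|: Vsub ends Y.
Proof.
apply/setP => v; rewrite in_setU; apply/(VsubP _ _)/orP => [[e]|[]/VsubP[e eX ve]].
- by rewrite in_setU => /orP[] eX ve; [left|right]; apply/VsubP; exists e.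
- by exists e; rewrite // in_setU eX.
- by exists e; rewrite // in_setU eX orbT.
Qed.

Lemma Vsub1 e : Vsub ends [set e] = [set (ends e).1; (ends e).2].
Proof.
apply/setP => v; apply/VsubP/idP => [[g]|]; first by rewrite inE => /eqP->; rewrite !inE.
by rewrite !inE => ve; exists e; rewrite ?inE.
Qed.

Lemma in_Vsub1 e v : (v \in Vsub ends [set e]) = incident ends v e.
Proof. by rewrite Vsub1 !inE. Qed.

Lemma adjSub_sym X : symmetric (adjSub ends X).
Proof. by move=> u v; apply/existsP/existsP => -[e]; rewrite orbC; exists e. Qed.

Lemma adjSub_ends X e : e \in X -> adjSub ends X (ends e).1 (ends e).2.
Proof. by move=> eX; apply/existsP; exists e; rewrite eX -surjective_pairing eqxx. Qed.

Lemma adjSubP X u v :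
  adjSub ends X u v -> exists2 e, e \in X & incident ends u e && incident ends v e.
Proof.
case/existsP => e /andP[eX /orP[]/eqP ends_e]; exists e => //;
  by rewrite /incident ends_e !eqxx ?orbT.
Qed.

Lemma adjSub_connect_sym X : connect_sym (adjSub ends X).
Proof. exact/sym_connect_sym/adjSub_sym. Qed.

Lemma closed_compV X v : closed (adjSub ends X) (compV ends X v).
Proof.
by move=> u w uw; rewrite !inE; apply: connect_closed (adjSub_connect_sym X) _ _ _ uw.
Qed.

Lemma compV_sub_closed X v (U : {pred V}) :
  closed (adjSub ends X) U -> v \in U -> compV ends X v \subset U.
Proof.
move=> clU vU; apply/subsetP => u; rewrite inE => vu.
by rewrite -(closed_connect clU vu).
Qed.

Lemma closed_Vsub X : closed (adjSub ends X) (Vsub ends X).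
Proof.
apply: intro_closed; first exact: adjSub_connect_sym.
by move=> u w /adjSubP[e eX /andP[_ we]] _; apply/VsubP; exists e.
Qed.

Lemma compE_sub X v : compE ends X v \subset X.
Proof. by apply/subsetP => e; rewrite inE => /andP[]. Qed.

Lemma Vsub_compE X v : Vsub ends (compE ends X v) \subset compV ends X v.
Proof.
apply/subsetP => u /VsubP[e]; rewrite inE => /andP[eX e1] /orP[]/eqP-> //.
by rewrite -(closed_compV v (adjSub_ends eX)).
Qed.

Lemma disjoint_Vsub_compD X v :
  [disjoint Vsub ends (X :\: compE ends X v) & compV ends X v].
Proof.
apply/pred0P => u /=; apply/andP => -[/VsubP[e]].
rewrite in_setD => /andP[eA eX] ue uC.
have e1 : (ends e).1 \notin compV ends X v by move: eA; rewrite inE eX.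
case/orP: ue => /eqP ue; last rewrite (closed_compV v (adjSub_ends eX)) in e1.
all: by rewrite ue (negbTE e1) in uC.
Qed.

Lemma grow_by_edge Y e w :
  w \in Vsub ends Y -> incident ends w e ->
  #|Vsub ends (Y :|: [set e]) :\: Vsub ends Y| <= 1.
Proof.
move=> wY we; rewrite VsubU setDUl setDv set0U -ltnS.
have : 0 < #|Vsub ends [set e] :&: Vsub ends Y|.
  by apply/card_gt0P; exists w; rewrite inE wY in_Vsub1 we.
have := cardsID (Vsub ends Y) (Vsub ends [set e]); rewrite Vsub1 cards2; lia.
Qed.

Lemma grow_by_component B Y v :
  no_tree_component ends B -> v \in Vsub ends B ->
  closed (adjSub ends B) (Vsub ends Y) -> v \notin Vsub ends Y ->
  compE ends B v \subset B :\: Y /\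
  #|Vsub ends (Y :|: compE ends B v) :\: Vsub ends Y| <= #|compE ends B v|.
Proof.
move=> ntB vB clY vY.
have CY : compV ends B v \subset [predC Vsub ends Y].
  exact: compV_sub_closed (predC_closed clY) _.
split.
  apply/subsetP => e; rewrite [e \in _]inE in_setD => /andP[eB e1]; rewrite eB andbT.
  move: (subsetP CY _ e1); rewrite inE; apply: contraNN => eY.
  by apply/VsubP; exists e; rewrite // /incident eqxx.
rewrite VsubU setDUl setDv set0U.
apply: leq_trans (ntB v vB); apply: leq_trans (subset_leq_card (Vsub_compE B v)).
exact/subset_leq_card/subsetDl.
Qed.

Lemma exists_grow B Y :
  no_tree_component ends B -> B :\: Y != set0 ->
  exists2 Z : {set E}, Z \subset B :\: Y &
    (Z != set0) && (#|Vsub ends (Y :|: Z) :\: Vsub ends Y| <= #|Z|).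
Proof.
move=> ntB /set0Pn[g gBY].
case: (boolP [exists e in B :\: Y, ~~ [disjoint Vsub ends [set e] & Vsub ends Y]]).
  case/existsP => e /andP[eBY /pred0Pn[w /andP[/VsubP[e' e'e we'] wY]]].
  move: e'e we'; rewrite inE => /eqP-> we.
  exists [set e]; first by rewrite sub1set.
  by rewrite cards1 (grow_by_edge wY we) andbT; apply/set0Pn; exists e; rewrite inE.
move/existsPn => far.
have clY : closed (adjSub ends B) (Vsub ends Y).
  apply: intro_closed; first exact: adjSub_connect_sym.
  move=> u w /adjSubP[e eB /andP[ue we]] uY; apply/VsubP; exists e => //.
  apply: contraTT uY => eY; move: (far e); rewrite in_setD eY eB /= negbK.
  by move/pred0P/(_ u) => /=; rewrite in_Vsub1 ue /= => ->.
pose v := (ends g).1.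
have gB : g \in B := subsetP (subsetDl B Y) g gBY.
have vB : v \in Vsub ends B by apply/VsubP; exists g; rewrite // /incident eqxx.
have vY : v \notin Vsub ends Y.
  move: (far g); rewrite gBY negbK => /pred0P/(_ v) /=.
  by rewrite in_Vsub1 /incident eqxx /= => ->.
have [sAB growA] := grow_by_component ntB vB clY vY.
exists (compE ends B v) => //; rewrite growA andbT.
by apply/set0Pn; exists g; rewrite !inE connect0 andbT.
Qed.

Lemma card_VsubD_le B Y :
  no_tree_component ends B -> #|Vsub ends B :\: Vsub ends Y| <= #|B :\: Y|.
Proof.
move=> ntB; move: {2}#|B :\: Y| (leqnn #|B :\: Y|) => n.
elim: n Y => [|n IHn] Y BYn; have [/eqP|BY0] := eqVneq (B :\: Y) set0.
1,3: by rewrite setD_eq0 => /VsubS; rewrite -setD_eq0 => /eqP->; rewrite cards0.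
  by move: BYn; rewrite leqn0 cards_eq0 (negbTE BY0).
have [Z sZ /andP[Z0 growZ]] := exists_grow ntB BY0.
have cardBY : #|B :\: Y| = #|B :\: (Y :|: Z)| + #|Z|.
  by rewrite -setDDl -(cardsID Z (B :\: Y)) (setIidPr sZ) addnC.
have Zgt0 : 0 < #|Z| by rewrite card_gt0.
have IH := IHn (Y :|: Z) ltac:(lia).
have sub : Vsub ends B :\: Vsub ends Y \subset
    (Vsub ends B :\: Vsub ends (Y :|: Z)) :|: (Vsub ends (Y :|: Z) :\: Vsub ends Y).
  apply/subsetP => u; rewrite in_setD => /andP[uY uB].
  by rewrite in_setU !in_setD uY uB andbT; case: (u \in Vsub ends (Y :|: Z)).
have := leq_trans (subset_leq_card sub) (leq_card_setU _ _); lia.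
Qed.

Definition induced (U : {set V}) : {set E} := [set e | Vsub ends [set e] \subset U].

Lemma Vsub_sub_induced X U : X \subset induced U -> Vsub ends X \subset U.
Proof.
move=> sXU; apply/subsetP => v /VsubP[e eX ve].
by move: (subsetP sXU e eX); rewrite inE => /subsetP; apply; rewrite in_Vsub1.
Qed.

Lemma sub_induced_Vsub X : X \subset induced (Vsub ends X).
Proof. by apply/subsetP => e eX; rewrite inE VsubS // sub1set. Qed.

End Graph.

Section Sparsity.
Variables (V E : finType) (ends : E -> V * V) (k : nat).
Implicit Types (B C D I T X Y : {set E}) (e g : E).

(* Every nonempty Y ⊆ I has Δ G<Y> <= k - 1; for Y = ∅ the condition is 0 < k. *)
Definition sparse I : Prop :=
  forall Y, Y \subset I -> #|Y| < #|Vsub ends Y| + k.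

Lemma circuit_of_dep C :
  Mk_dep ends k C -> exists2 D : {set E}, D \subset C & Mk_circuit ends k D.
Proof.
move=> depC; pose P D := (D \subset C) && Mk_dep ends k D.
have PC : P C by rewrite /P subxx depC.
case: (@arg_minnP _ C P (fun D => #|D|) PC) => D /andP[sDC depD] minD.
exists D => //; rewrite /Mk_circuit depD; apply/forallP => D'; apply/implyP => ltD'.
apply: contraL (proper_card ltD') => depD'; rewrite -leqNgt minD //.
by rewrite /P depD' (subset_trans (proper_sub ltD') sDC).
Qed.

Lemma circuit_not_sub_sparse I C : sparse I -> Mk_circuit ends k C -> ~~ (C \subset I).
Proof.
move=> spI /andP[/andP[_ /eqP cardC] _]; apply/negP => /spI.
by rewrite cardC ltnn.
Qed.

Lemma no_tree_sparse B :
  #|B|.+1 = #|Vsub ends B| + k -> no_tree_component ends B -> sparse B.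
Proof.
move=> cB ntB Y sYB; have := card_VsubD_le Y ntB.
have := cardsID Y B; rewrite (setIidPr sYB).
have := cardsID (Vsub ends Y) (Vsub ends B); rewrite (setIidPr (VsubS ends sYB)); lia.
Qed.

Section Tight.
Variable B : {set E}.
Hypothesis spB : sparse B.

Definition tight T := (T \subset B) && (#|T|.+1 == #|Vsub ends T| + k).

Lemma tightU T1 T2 : tight T1 -> tight T2 -> tight (T1 :|: T2).
Proof.
move=> /andP[sT1 /eqP cT1] /andP[sT2 /eqP cT2].
have sU : T1 :|: T2 \subset B by rewrite subUset sT1 sT2.
have := spB sU; have := spB (subset_trans (subsetIl T1 T2) sT1).
have : Vsub ends (T1 :&: T2) \subset Vsub ends T1 :&: Vsub ends T2.
  by rewrite subsetI !VsubS ?subsetIl ?subsetIr.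
move/subset_leq_card; have := cardsUI T1 T2.
have := cardsUI (Vsub ends T1) (Vsub ends T2).
rewrite /tight sU VsubU /= => *; apply/eqP; lia.
Qed.

Lemma tight_mem T g :
  tight T -> g \in B -> Vsub ends [set g] \subset Vsub ends T -> g \in T.
Proof.
move=> /andP[sTB /eqP cT] gB sgT; apply: contraT => gT.
have sgTB : g |: T \subset B by rewrite subUset sub1set gB sTB.
by have := spB sgTB; rewrite cardsU1 gT VsubU (setUidPr sgT); lia.
Qed.

Lemma tight_circuitD C e :
  Mk_circuit ends k C -> e \in C -> C :\ e \subset B ->
  tight (C :\ e) /\ Vsub ends (C :\ e) = Vsub ends C.
Proof.
case/andP=> /andP[_ /eqP cC] _ eC sCB.
have sV := VsubS ends (subsetDl C [set e]).
have := spB sCB; have := cardsD1 e C; have := subset_leq_card sV; rewrite eC => *.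
have eqV : Vsub ends (C :\ e) = Vsub ends C by apply/eqP; rewrite eqEcard sV /=; lia.
by rewrite /tight sCB eqV; split => //; apply/eqP; lia.
Qed.

Lemma sparse_tight_no_tree :
  #|B|.+1 = #|Vsub ends B| + k -> no_tree_component ends B.
Proof.
move=> cB v vB; rewrite leqNgt; apply/negP => ltA.
have := spB (subsetDl B (compE ends B v)).
have sub : Vsub ends (B :\: compE ends B v) :|: compV ends B v \subset Vsub ends B.
  by rewrite subUset VsubS ?subsetDl //= (compV_sub_closed (@closed_Vsub _ _ ends B) vB).
have := leq_card_disjoint (disjoint_Vsub_compD ends B v) sub.
have := cardsID (compE ends B v) B; rewrite (setIidPr (compE_sub ends B v)); lia.
Qed.

Lemma exists_tight_max T0 :
  tight T0 -> exists2 T, tight T & forall T', tight T' -> T' \subset T.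
Proof.
move=> tT0; case: (@arg_maxnP _ T0 tight (fun T => #|T|) tT0) => T tT maxT.
exists T => // T' tT'.
have /eqP-> : T == T :|: T'.
  by rewrite eqEcard subsetUl; apply: maxT; apply: tightU.
exact: subsetUr.
Qed.

End Tight.

Hypothesis k_gt0 : 0 < k.

Lemma dep_of_excess X :
  #|Vsub ends X| + k <= #|X| -> exists2 C : {set E}, C \subset X & Mk_dep ends k C.
Proof.
move=> excX; pose P D := (D \subset X) && (#|Vsub ends D| + k <= #|D|).
have PX : P X by rewrite /P subxx excX.
case: (@arg_minnP _ X P (fun D => #|D|) PX) => D /andP[sDX excD] minD.
exists D => //; apply/andP; split; first by rewrite -card_gt0; lia.
rewrite eqn_leq excD andbT leqNgt; apply/negP => ltD.
have [e eD] : exists e, e \in D by apply/card_gt0P; lia.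
have := minD (D :\ e); rewrite /P (subset_trans (subsetDl D _) sDX) /=.
have := subset_leq_card (VsubS ends (subsetDl D [set e])).
have := cardsD1 e D; rewrite eD; lia.
Qed.

Lemma Mk_indep_sparse I : Mk_indep ends k I <-> sparse I.
Proof.
split=> [indI Y sYI | spI].
  rewrite ltnNge; apply/negP => /dep_of_excess[C sCY /circuit_of_dep[D sDC cD]].
  move/forallP/(_ D): indI; rewrite cD implybF.
  by rewrite (subset_trans sDC (subset_trans sCY sYI)).
apply/forallP => C; apply/implyP => sCI; apply/negP => /andP[/andP[_ /eqP cardC] _].
by have := spI C sCI; rewrite cardC ltnn.
Qed.

Lemma circuit_proper_sparse C D :
  Mk_circuit ends k C -> D \proper C -> #|D| < #|Vsub ends D| + k.
Proof.
case/andP=> _ /forallP minC ltDC; rewrite ltnNge; apply/negP.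
move=> /dep_of_excess[D' sD'D depD'].
by move: (minC D'); rewrite (sub_proper_trans sD'D ltDC) depD'.
Qed.

Lemma circuit_sub_induced B T C :
  sparse B ->
  tight B T -> Mk_circuit ends k C -> C :\: induced ends (Vsub ends T) \subset B ->
  ~~ [disjoint C & induced ends (Vsub ends T)] -> C \subset induced ends (Vsub ends T).
Proof.
move=> spB /andP[sTB /eqP cT] cC sC2B /pred0Pn[e0 /andP[e0C e0F]].
set U := Vsub ends T; set F := induced ends U; rewrite -/U in cT.
apply: contraT => nsCF.
set C1 := C :&: F; set C2 := C :\: F.
have ltC1 : C1 \proper C.
  by rewrite properEneq subsetIl andbT; apply: contraNneq nsCF => <-; apply: subsetIr.
have := circuit_proper_sparse cC ltC1.
have sC2TB : C2 :|: T \subset B by rewrite subUset sC2B sTB.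
have := spB _ sC2TB; rewrite VsubU -/U.
have dC2T : [disjoint C2 & T].
  apply/pred0P => g /=; apply/andP => -[]; rewrite in_setD => /andP[gF _] gT.
  by move: gF; rewrite (subsetP (sub_induced_Vsub ends T) g gT).
have := cardsUI C2 T; rewrite (disjoint_setI0 dC2T) cards0.
have := cardsUI (Vsub ends C2) U; have := cardsID U (Vsub ends C2).
have VC1 : Vsub ends C1 \subset U by apply: Vsub_sub_induced; apply: subsetIr.
have : #|Vsub ends C1| + #|Vsub ends C2 :\: U| <= #|Vsub ends C|.
  apply: leq_card_disjoint.
    apply/pred0P => v /=; apply/andP => -[/(subsetP VC1) vU].
    by rewrite in_setD vU.
  by rewrite subUset !VsubS ?subsetIl // (subset_trans (subsetDl _ _)) ?VsubS ?subsetDl.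
have := cardsID F C; rewrite -/C1 -/C2; case/andP: cC => /andP[_ /eqP cC] _; lia.
Qed.

Section Base.
Variable B : {set E}.
Hypothesis baseB : Mk_base ends k B.

Lemma base_sparse : sparse B.
Proof. by case/andP: baseB => /Mk_indep_sparse. Qed.

Lemma notin_base_tight e :
  e \notin B -> exists2 T, tight B T & Vsub ends [set e] \subset Vsub ends T.
Proof.
move=> eB; case/andP: baseB => _ /forallP/(_ (e |: B)).
rewrite properUr ?sub1set //= => /forallPn[C]; rewrite negb_imply negbK => /andP[sC cC].
have eC : e \in C.
  apply: contraR (circuit_not_sub_sparse base_sparse cC) => eC.
  apply/subsetP => g gC; move: (subsetP sC g gC).
  by rewrite in_setU1 => /predU1P[ge|//]; rewrite -ge gC in eC.
have sCB : C :\ e \subset B by rewrite subDset.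
have [tC eqV] := tight_circuitD base_sparse cC eC sCB.
by exists (C :\ e); rewrite // eqV VsubS // sub1set.
Qed.

Lemma base_spanning_tight :
  Mk_connected ends k -> tight B B /\ forall e, Vsub ends [set e] \subset Vsub ends B.
Proof.
case=> cardE conn.
have [e0 e0B] : exists e0, e0 \notin B.
  have /card_gt0P[f0 _] : 0 < #|E| by lia.
  have [C [cC _]] := conn f0 f0.
  by have /subsetPn[e0 _ e0B] := circuit_not_sub_sparse base_sparse cC; exists e0.
have [T0 tT0 _] := notin_base_tight e0B.
have [T tT tight_sub] := exists_tight_max base_sparse tT0.
set F := induced ends (Vsub ends T).
have notinB_F g : g \notin B -> g \in F.
  move=> gB; have [T' tT' sT'] := notin_base_tight gB.
  by rewrite inE (subset_trans sT' (VsubS _ (tight_sub _ tT'))).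
have allF g : g \in F.
  have [C [cC [e0C gC]]] := conn e0 g.
  have sCF : C \subset F.
    apply: (circuit_sub_induced base_sparse tT cC).
      apply/subsetP => h; rewrite in_setD => /andP[hF _].
      by apply: contraR hF; apply: notinB_F.
    by apply/pred0Pn; exists e0; rewrite /= e0C notinB_F.
  exact: (subsetP sCF).
have BT : B = T.
  case/andP: (tT) => sTB _; apply/eqP; rewrite eqEsubset sTB andbT.
  apply/subsetP => g gB; apply: (tight_mem base_sparse tT gB).
  by have := allF g; rewrite inE.
split=> [|e]; first by rewrite -BT in tT.
by have := allF e; rewrite inE BT.
Qed.

End Base.

Lemma spanning_sparse_base B :
  Vsub ends B = [set: V] -> #|B|.+1 = #|Vsub ends B| + k -> sparse B -> Mk_base ends k B.
Proof.
move=> VB cB spB; apply/andP; split; first exact/Mk_indep_sparse.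
apply/forallP => I; apply/implyP => ltBI; apply/negP => /Mk_indep_sparse/(_ I (subxx I)).
have := proper_card ltBI; have := max_card (Vsub ends I); rewrite VB cardsT in cB; lia.
Qed.

End Sparsity.

Theorem mainTheorem16 (V E : finType) (ends : E -> V * V) (k : nat) :
  no_isolated ends -> (1 <= k)%N -> Mk_connected ends k ->
  forall B : {set E},
    Mk_base ends k B <->
    [/\ deltaSub ends B = (k%:Z - 1)%R,
        Vsub ends B = [set: V]
      & no_tree_component ends B].
Proof.
move=> noiso k_gt0 conn B; split=> [baseB | [dB VB ntB]].
  have [/andP[_ /eqP cB] spanB] := base_spanning_tight k_gt0 baseB conn.
  have VB : Vsub ends B = [set: V].
    apply/setP => v; rewrite in_setT; have [e ve] := noiso v.
    by apply: (subsetP (spanB e)); rewrite in_Vsub1.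
  split=> //; last exact: sparse_tight_no_tree (base_sparse k_gt0 baseB) cB.
  by rewrite /deltaSub; lia.
have cB : #|B|.+1 = #|Vsub ends B| + k by move: dB; rewrite /deltaSub; lia.
apply: (spanning_sparse_base k_gt0 VB cB); exact: no_tree_sparse cB ntB.
Qed.
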